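(* Let $\Gamma$ be a connected drawing. Then $2|E_0| \ge N(U_5)+N(U_6)$.
   Context: Drawings are on the sphere: vertices are distinct points, edges (of a graph possibly with parallel edges, no loops) are Jordan arcs; any two edges share finitely many points, each a common endpoint or a proper crossing; no three edges cross at one point; no edge crosses itself; adjacent edges do not cross. $E_0$ is the set of uncrossed edges. An edge with $i$ crossings is split into $i+1$ edge-segments; an edge-segment is inner if both its endpoints are crossings and outer otherwise. The planarization replaces each crossing by a degree-$4$ vertex; the drawing is connected if its planarization is connected. Cells are the components of the sphere minus all vertices and edges; the boundary of a cell is a cyclic sequence alternating between edge-segments and vertices/crossings. Cell types: $U_5$: boundary $u$, uncrossed edge $uv$, $v$, outer segment, crossing, outer segment (two vertices $u,v$). $U_6$: boundary $u$, uncrossed edge $uv$, $v$, outer segment, crossing, inner segment, crossing, outer segment. $N(T)$ is the number of cells of type $T$. *)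

(* Combinatorial model of a (connected) drawing on the sphere
   via its planarization, encoded as a combinatorial map (rotation system). *)
From mathcomp Require Import all_boot.
From mathcomp Require Import perm.
Set Implicit Arguments. Unset Strict Implicit. Unset Printing Implicit Defensive.

(* Darts = the two orientations of each edge-segment of the planarization.
   - [alpha d] : the reverse dart (other end of the same edge-segment);
   - [sigma d] : the next dart in the cyclic rotation around the node
                 (vertex or crossing) where [d] starts;
   - [cross d] : the node where [d] starts is a crossing (otherwise a vertex).
   Nodes = sigma-orbits; edge-segments = alpha-orbits;
   cells = orbits of [phi := sigma \o alpha] (facial walks). *)
Record drawing (D : finType) := Drawing {
  alpha : {perm D};
  sigma : {perm D};
  cross : pred D
}.

Section DrawingDefs.
Variables (D : finType) (G : drawing D).

Definition phi (d : D) : D := sigma G (alpha G d).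
Definition isV (d : D) : bool := ~~ cross G d.

(* Two darts belong to the same edge of the drawing: generated by going to the
   other end of a segment, and by going straight through a crossing (the edge
   through a degree-4 crossing uses the opposite darts d and sigma^2 d). *)
Definition edge_step (d d' : D) : bool :=
  (d' == alpha G d) || (cross G d && (d' == sigma G (sigma G d))).
Definition same_edge : rel D := connect edge_step.

Definition map_step (d d' : D) : bool := (d' == alpha G d) || (d' == sigma G d).

Definition is_drawing : Prop :=
  (forall d, alpha G (alpha G d) = d) /\
      (forall d, alpha G d != d) /\
      (forall d, cross G (sigma G d) = cross G d) /\
      (* no three edges cross at a point: crossings have degree 4 *)
      (forall d, cross G d -> fingraph.order (sigma G) d = 4) /\
      (* every edge is an arc between vertices (no closed curves of crossings) *)
      (forall d, exists v, isV v && same_edge d v) /\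
      (* no loops: the two endpoint darts of an edge lie at distinct vertices *)
      (forall v w, isV v -> isV w -> same_edge v w -> v != w ->
                   ~~ fconnect (sigma G) v w) /\
      (* at a crossing two different edges cross (no self-crossing), and they
         are not adjacent (share no endpoint vertex) *)
      (forall d, cross G d ->
         ~~ same_edge d (sigma G d) /\
         forall v w, isV v -> isV w -> same_edge d v -> same_edge (sigma G d) w ->
                     ~~ fconnect (sigma G) v w).

Definition connected_planarization : Prop :=
  forall d d', connect map_step d d'.

(* The map is embedded in the sphere (Euler: nodes - segments + cells = 2). *)
Definition spherical : Prop :=
  fcard (sigma G) D + fcard phi D = (#|D| %/ 2) + 2.

(* E_0: uncrossed edges.  An uncrossed edge is a single segment between two
   vertices, i.e. exactly the two darts d, alpha d with both ends vertices. *)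
Definition E0_darts : {set D} := [set d | isV d && isV (alpha G d)].
Definition nE0 : nat := #|E0_darts| %/ 2.

(* Cell types, read off the facial walk d, phi d, phi^2 d, ... (the start node
   of phi^k d is the end node of phi^(k-1) d).
   U5: u, uncrossed uv, v, outer segment, crossing, outer segment.
   U6: u, uncrossed uv, v, outer, crossing, inner, crossing, outer. *)
Definition U5_pattern (e : D) : bool :=
  [&& isV e, isV (phi e) & cross G (phi (phi e))].
Definition U6_pattern (e : D) : bool :=
  [&& isV e, isV (phi e), cross G (phi (phi e)) & cross G (phi (phi (phi e)))].

Definition isU5 (d : D) : bool :=
  (fingraph.order phi d == 3) && [exists e, fconnect phi d e && U5_pattern e].
Definition isU6 (d : D) : bool :=
  (fingraph.order phi d == 4) && [exists e, fconnect phi d e && U6_pattern e].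

Definition N_U5 : nat := fcard phi isU5.
Definition N_U6 : nat := fcard phi isU6.

End DrawingDefs.

From mathcomp Require Import all_boot.
From mathcomp Require Import perm.

Set Implicit Arguments.
Unset Strict Implicit.
Unset Printing Implicit Defensive.

(* Every U5 or U6 cell has an uncrossed edge uv on its boundary, seen from the
   cell as a dart of E0.  Cells are disjoint facial orbits, so choosing such a
   dart in each cell is injective; and the darts of E0 are exactly twice the
   number of uncrossed edges, since alpha pairs them up without fixed points. *)

Section OrbitCounting.
Variables (T : finType) (f : T -> T).

Lemma order_fpfree_involution (x : T) :
  f (f x) = x -> f x != x -> fingraph.order f x = 2.
Proof.
move=> ffx fx_neq; apply: (@order_cycle _ _ [:: x; f x]) => /=.
- by rewrite ffx !eqxx.
- by rewrite inE eq_sym fx_neq.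
- by rewrite inE eqxx.
Qed.

Lemma card_fpfree_involution_closed (A : {pred T}) :
  involutive f -> (forall x, f x != x) -> fclosed f A -> #|A| = 2 * fcard f A.
Proof.
move=> fK f_neq clA; rewrite mulnC (fcard_order_set (inv_inj fK)) //.
by apply/subsetP=> x _; rewrite inE order_fpfree_involution.
Qed.

Lemma fcardU_disjoint (a b : {pred T}) :
  [disjoint a & b] -> fcard f [predU a & b] = fcard f a + fcard f b.
Proof.
move=> dis_ab; rewrite /n_comp_mem -cardUI.
have /eqP -> : [disjoint [predI roots (frel f) & a] & [predI roots (frel f) & b]].
  by apply: disjointW dis_ab; apply/subsetP=> x /andP[].
by rewrite addn0; apply: eq_card => x; rewrite !inE andb_orr.
Qed.

Hypothesis f_inj : injective f.

Lemma fcard_leq_card_meet (a : {pred T}) (B : {set T}) :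
  (forall x, x \in a -> exists2 y, fconnect f x y & y \in B) -> fcard f a <= #|B|.
Proof.
move=> a_meets_B; pose S := [predI roots (frel f) & a].
have pick_in x : x \in S -> exists y, fconnect f x y && (y \in B).
  by case/andP=> _ /a_meets_B[y xy yB]; exists y; rewrite xy.
pose g x := odflt x [pick y | fconnect f x y && (y \in B)].
have g_spec x : x \in S -> fconnect f x (g x) && (g x \in B).
  by move/pick_in=> [y xy]; rewrite /g; case: pickP => [z -> | /(_ y)] //; rewrite xy.
have g_inj : {in S &, injective g}.
  move=> x y xS yS gxy; have sym := fconnect_sym f_inj.
  have /andP[x_gx _] := g_spec x xS; have /andP[y_gy _] := g_spec y yS.
  case/andP: xS => /eqP <- _; case/andP: yS => /eqP <- _.
  by apply/(rootP sym); rewrite (connect_trans x_gx) // gxy sym.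
rewrite /n_comp_mem -(card_in_imset g_inj); apply: subset_leq_card.
by apply/subsetP=> _ /imsetP[x xS ->]; case/andP: (g_spec x xS).
Qed.

End OrbitCounting.

Section DrawingCells.
Variables (D : finType) (G : drawing D).
Hypothesis cross_sigma : forall d, cross G (sigma G d) = cross G d.

Lemma isV_phi (d : D) : isV G (phi G d) = isV G (alpha G d).
Proof. by rewrite /isV /phi cross_sigma. Qed.

Lemma U5_pattern_E0 (e : D) : U5_pattern G e -> e \in E0_darts G.
Proof. by case/and3P=> Ve Vphie _; rewrite inE Ve -isV_phi. Qed.

Lemma U6_pattern_E0 (e : D) : U6_pattern G e -> e \in E0_darts G.
Proof. by case/and4P=> Ve Vphie _ _; rewrite inE Ve -isV_phi. Qed.

Lemma U5_U6_cells_meet_E0 (d : D) : isU5 G d || isU6 G d ->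
  exists2 e, fconnect (phi G) d e & e \in E0_darts G.
Proof.
case/orP=> /andP[_ /existsP[e /andP[de pat_e]]]; exists e => //.
- exact: U5_pattern_E0.
- exact: U6_pattern_E0.
Qed.

Lemma phi_inj : injective (phi G).
Proof. by move=> x y /perm_inj /perm_inj. Qed.

Lemma disjoint_isU5_isU6 : [disjoint isU5 G & isU6 G].
Proof.
apply/pred0P=> d; rewrite /= !unfold_in.
by apply/negP=> /andP[/andP[/eqP-> _] /andP[]].
Qed.

Lemma double_nE0 :
  involutive (alpha G) -> (forall d, alpha G d != d) -> 2 * nE0 G = #|E0_darts G|.
Proof.
move=> alphaK alpha_neq; rewrite /nE0 (card_fpfree_involution_closed alphaK) //.
- by rewrite mulKn.
- by move=> x _ /eqP <-; rewrite !inE alphaK andbC.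
Qed.

End DrawingCells.

Theorem mainTheorem7 (D : finType) (G : drawing D) :
  is_drawing G -> connected_planarization G -> spherical G ->
  N_U5 G + N_U6 G <= 2 * nE0 G.
Proof.
move=> [alphaK [alpha_neq [cross_sigma _]]] _ _.
rewrite /N_U5 /N_U6 -fcardU_disjoint ?disjoint_isU5_isU6 // double_nE0 //.
apply: fcard_leq_card_meet; first exact: phi_inj.
exact: U5_U6_cells_meet_E0.
Qed.
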